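(* Let $d\ge 1$ and let $(X_1,\ldots,X_d,Y)$ be a random vector with continuous marginal distribution functions $F_{X_1},\ldots,F_{X_d},F_Y$ and $(d+1)$-dimensional copula $C$. Let $(U_1,\ldots,U_d,V)$ be a random vector with standard uniform marginals and copula $C$. Fix $\boldsymbol{\alpha}=(\alpha_1,\ldots,\alpha_d)\in[0,1)^d$ with $C(\boldsymbol{\alpha},1)<1$, and let $A_{\boldsymbol U}=\{\exists\, i: U_i>\alpha_i\}$ and $A_{\boldsymbol X}=\{\exists\, i: X_i>\mathrm{VaR}_{\alpha_i}(X_i)\}$. Then: (a) the distribution function of $V$ conditional on $A_{\boldsymbol U}$ is $$F_{V|A_{\boldsymbol U}}(v)=\frac{v-C(\boldsymbol{\alpha},v)}{1-C(\boldsymbol{\alpha},1)},\qquad v\in[0,1],$$ and this function is a distortion function; (b) the distribution function of $Y$ conditional on $A_{\boldsymbol X}$ is $F_{Y|A_{\boldsymbol X}}(y)=F_{V|A_{\boldsymbol U}}(F_Y(y))$ for all $y\in\mathbb{R}$.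
   Context: For a $(d+1)$-dimensional copula $C$, write $C(\boldsymbol{\alpha},v)=C(\alpha_1,\ldots,\alpha_d,v)$. For a random variable $Z$ with distribution function $F$, $F^{-1}(t)=\inf\{x\in\mathbb{R}:F(x)\ge t\}$ and $\mathrm{VaR}_t(Z)=F^{-1}(t)$. A distortion function is a nondecreasing function $h:[0,1]\to[0,1]$ with $h(0)=0$ and $h(1)=1$. *)

From HB Require Import structures.
From mathcomp Require Import all_boot all_order all_algebra.
From mathcomp Require Import all_classical all_reals all_analysis.
Set Implicit Arguments. Unset Strict Implicit. Unset Printing Implicit Defensive.
Import Order.TTheory GRing.Theory Num.Theory.
Local Open Scope classical_set_scope.
Local Open Scope ring_scope.

Definition Fr (dT : measure_display) (T : measurableType dT) (R : realType)
  (P : probability T R) (Z : {RV P >-> R}) : R -> R :=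
  fun r => fine (cdf Z r).

(* VaR_t(Z) = F^{-1}(t) = inf {x in R : F(x) >= t}, in the extended reals
   (inf of the empty set is +oo, inf of an unbounded-below set is -oo) *)
Definition VaR (dT : measure_display) (T : measurableType dT) (R : realType)
  (P : probability T R) (Z : {RV P >-> R}) (t : R) : \bar R :=
  ereal_inf [set (x%:E)%E | x in [set x : R | t <= Fr Z x]].

Definition condprob (dT : measure_display) (T : measurableType dT) (R : realType)
  (P : probability T R) (B A : set T) : R :=
  fine (P (B `&` A)) / fine (P A).

Definition joint_cdf (dT : measure_display) (T : measurableType dT) (R : realType)
  (P : probability T R) (n : nat) (Z : 'I_n -> {RV P >-> R}) (z : 'I_n -> R) : R :=
  fine (P [set t | forall i, Z i t <= z i]).

Definition in_cube (R : realType) (n : nat) (u : 'I_n -> R) : Prop :=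
  forall i, 0 <= u i <= 1.

(* n-dimensional copula (values on [0,1]^n): grounded, uniform margins,
   n-increasing *)
Definition is_copula (R : realType) (n : nat) (C : ('I_n -> R) -> R) : Prop :=
  [/\ (forall u, in_cube u -> (exists i, u i = 0) -> C u = 0),
      (forall (i : 'I_n) (a : R), 0 <= a <= 1 ->
          C (fun j => if j == i then a else 1) = a) &
      (forall a b : 'I_n -> R, in_cube a -> in_cube b -> (forall i, a i <= b i) ->
          0 <= \sum_(S : {set 'I_n}) (-1) ^+ #|S| *
                 C (fun i => if i \in S then a i else b i))].

Definition copula_of (dT : measure_display) (T : measurableType dT) (R : realType)
  (P : probability T R) (n : nat) (C : ('I_n -> R) -> R)
  (Z : 'I_n -> {RV P >-> R}) : Prop :=
  is_copula C /\ forall z, joint_cdf Z z = C (fun i => Fr (Z i) (z i)).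

(* the random vector (X_1, ..., X_d, Y): indices 0..d-1 are X, index d is Y *)
Definition xy (dT : measure_display) (T : measurableType dT) (R : realType)
  (P : probability T R) (d : nat) (X : 'I_d -> {RV P >-> R}) (Y : {RV P >-> R}) :
  'I_d.+1 -> {RV P >-> R} :=
  fun i => match unlift ord_max i with Some j => X j | None => Y end.

Definition av (R : realType) (d : nat) (alpha : 'I_d -> R) (v : R) : 'I_d.+1 -> R :=
  fun i => match unlift ord_max i with Some j => alpha j | None => v end.

Definition distortion (R : realType) (h : R -> R) : Prop :=
  [/\ (forall v, 0 <= v <= 1 -> 0 <= h v <= 1),
      (forall v w, 0 <= v -> v <= w -> w <= 1 -> h v <= h w),
      h 0 = 0 & h 1 = 1].

(* Let N = {forall i, U_i <= alpha_i}. The exceedance event A_U is the complement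
   of N, and by Sklar's representation P(N, V <= v) = C(alpha, v); hence
   P(V <= v, A_U) = v - C(alpha, v) and P(A_U) = 1 - C(alpha, 1), which gives (a);
   monotonicity and the bounds of h are those of a conditional probability.
   For (b), continuity of F_{X_i} makes VaR_{alpha_i}(X_i) a point q_i with
   F_{X_i}(q_i) = alpha_i, so A_X is the complement of {forall i, X_i <= q_i},
   whose joint probability with {Y <= y} is C(alpha, F_Y(y)). Its total
   probability is the limit of these as y -> +oo, and equals C(alpha, 1) because
   C(alpha, .) is 1-Lipschitz (read off from the U-side). If some alpha_k = 0,
   A_X is sure and C(alpha, .) vanishes, and the same formula holds with N empty. *)

From HB Require Import structures.
From mathcomp Require Import all_boot all_order all_algebra.
From mathcomp Require Import all_classical all_reals all_analysis.
From mathcomp Require Import lra.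
Import Order.TTheory GRing.Theory Num.Theory numFieldNormedType.Exports.
Local Open Scope classical_set_scope.
Local Open Scope ring_scope.

Lemma continuous_inf_ge (R : realType) (f : R -> R) a :
  let S := [set x | a <= f x] in
  continuous f -> has_lbound S -> S !=set0 -> f (inf S) = a.
Proof.
move=> S cf lbS S0.
have closedS : closed S by exact: (continuous_closedP f).1 cf _ (@closed_ge _ a).
have /(itv_closed_infimums S0 closedS) a_le : infimums S (inf S).
  by split; [exact: ge_inf | move=> y; exact: lb_le_inf].
apply/eqP; rewrite eq_le a_le andbT leNgt; apply/negP => a_lt.
have [e /= e0 near_inf] := (nbhs_ballP _ _).1 (cvgr_gt _ (cf (inf S)) _ a_lt).
have /ge_inf : S (inf S - e / 2).
  by apply/ltW/near_inf; rewrite /ball /= opprB addrC subrK ger0_norm; lra.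
by move=> /(_ lbS); lra.
Qed.

Definition pr {dT : measure_display} {T : measurableType dT} {R : realType}
  (P : probability T R) (A : set T) : R := fine (P A).

Section real_probability.
Context {dT : measure_display} {T : measurableType dT} {R : realType}.
Context {P : probability T R}.

Lemma prE A : measurable A -> P A = (pr P A)%:E.
Proof. by move=> mA; rewrite /pr fineK // fin_num_measure. Qed.

Lemma pr_ge0 A : 0 <= pr P A.
Proof. exact: fine_ge0. Qed.

Lemma le_pr A B : measurable A -> measurable B -> A `<=` B -> pr P A <= pr P B.
Proof. by move=> mA mB AB; rewrite -lee_fin -!prE // le_measure ?inE. Qed.

Lemma pr_set0 : pr P set0 = 0.
Proof. by rewrite /pr measure0. Qed.

Lemma pr_setC A : measurable A -> pr P (~` A) = 1 - pr P A.
Proof.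
by move=> mA; apply: EFin_inj; rewrite EFinB -!prE ?probability_setC //; exact: measurableC.
Qed.

Lemma pr_setD A B : measurable A -> measurable B ->
  pr P (A `\` B) = pr P A - pr P (A `&` B).
Proof.
move=> mA mB; apply: EFin_inj.
rewrite EFinB -!prE ?measureD //; try exact: measurableI.
- by rewrite ltey_eq fin_num_measure.
- exact: measurableD.
Qed.

Lemma measurable_forall n (F : 'I_n -> set T) : (forall i, measurable (F i)) ->
  measurable [set t | forall i, F i t].
Proof.
move=> mF; rewrite (_ : [set t | _] = \bigcap_(i in setT) F i).
  by apply: fin_bigcap_measurable => //; exact: finite_setT.
by apply/seteqP; split => t /= Ft i //; exact: Ft.
Qed.

Lemma setC_forall_le n (Z : 'I_n -> T -> R) (a : 'I_n -> R) :
  ~` [set t | forall i, Z i t <= a i] = [set t | exists i, a i < Z i t].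
Proof.
apply/seteqP; split => t /=.
- by move=> /existsNP[i /negP]; rewrite -ltNge; exists i.
- by move=> [i ai] /(_ i); rewrite leNgt ai.
Qed.

Lemma measurable_sublevel (Z : {RV P >-> R}) r : measurable [set t | Z t <= r].
Proof.
rewrite (_ : [set t | _] = Z @^-1` `]-oo, r]); first exact: measurable_funPTI.
by apply/seteqP; split => t /=; rewrite in_itv.
Qed.

Lemma measurable_exists_gt n (Z : 'I_n -> {RV P >-> R}) a :
  measurable [set t | exists i, a i < Z i t].
Proof.
rewrite -setC_forall_le; apply/measurableC/measurable_forall => i.
exact: measurable_sublevel.
Qed.

Lemma FrE (Z : {RV P >-> R}) r : Fr Z r = pr P [set t | Z t <= r].
Proof.
rewrite /Fr /cdf /distribution /pushforward /pr.
by congr (fine (P _)); apply/seteqP; split => t /=; rewrite in_itv /= ?andbT.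
Qed.

Lemma Fr01 (Z : {RV P >-> R}) r : 0 <= Fr Z r <= 1.
Proof.
by rewrite FrE pr_ge0 -lee_fin -prE ?probability_le1 //; exact: measurable_sublevel.
Qed.

Lemma Fr_nondecreasing (Z : {RV P >-> R}) : {homo Fr Z : r s / r <= s}.
Proof.
move=> r s rs; rewrite !FrE; apply: le_pr; try exact: measurable_sublevel.
by move=> t /= /le_trans; apply.
Qed.

Lemma exists_Fr_gt (Z : {RV P >-> R}) a : a < 1 -> exists r, a < Fr Z r.
Proof.
move=> a1; have /fine_cvgP[_ FZ1] := cvg_cdfy1 Z.
have [M [_ FZ_gt]] := cvgr_gt _ FZ1 _ a1.
by exists (M + 1); apply: FZ_gt; rewrite ltrDl.
Qed.

Lemma exists_Fr_lt (Z : {RV P >-> R}) a : 0 < a -> exists r, Fr Z r < a.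
Proof.
move=> a0; have /fine_cvgP[_ FZ0] := cvg_cdfNy0 Z.
have [M [_ FZ_lt]] := cvgr_lt _ FZ0 _ a0.
by exists (M - 1); apply: FZ_lt; rewrite ltrBlDr ltrDl.
Qed.

Lemma pr_setI_sublevel A (Z : {RV P >-> R}) r : measurable A ->
  0 <= pr P A - pr P (A `&` [set t | Z t <= r]) <= 1 - Fr Z r.
Proof.
move=> mA; have mZ := measurable_sublevel Z r.
rewrite -pr_setD // pr_ge0 FrE -pr_setC //.
apply: le_pr; [exact: measurableD | exact: measurableC | by move=> t []].
Qed.

Lemma pr_eq_sublevel_limit N (Z : {RV P >-> R}) x : measurable N ->
  (forall r, `|x - pr P (N `&` [set t | Z t <= r])| <= 1 - Fr Z r) -> pr P N = x.
Proof.
move=> mN close; apply/eqP; rewrite -subr_eq0 -normr_le0.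
apply/ler_addgt0Pr => e e0; rewrite add0r.
have [r Fr_near1] : exists r, 1 - e / 2 < Fr Z r.
  by apply: exists_Fr_gt; rewrite ltrBlDr ltrDl divr_gt0.
have := pr_setI_sublevel _ Z r mN; set p := pr P (N `&` _) => /andP[p_le p_ge].
have := ler_distD p (pr P N) x; rewrite (ger0_norm p_le) (distrC p).
have := close r; rewrite -/p; lra.
Qed.

Lemma condprob_ge0 B A : 0 <= condprob P B A.
Proof. exact: divr_ge0 (pr_ge0 _) (pr_ge0 _). Qed.

Lemma condprob_le1 B A : measurable B -> measurable A -> condprob P B A <= 1.
Proof.
move=> mB mA; rewrite /condprob -/(pr P _) -/(pr P _).
have [->|A_neq0] := eqVneq (pr P A) 0; first by rewrite invr0 mulr0.
rewrite ler_pdivrMr ?lt_def ?A_neq0 ?pr_ge0 // mul1r.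
apply: le_pr => //; exact: measurableI.
Qed.

Lemma le_condprob A B B' : measurable A -> measurable B -> measurable B' ->
  B `<=` B' -> condprob P B A <= condprob P B' A.
Proof.
move=> mA mB mB' BB'; apply: ler_wpM2r; first by rewrite invr_ge0 pr_ge0.
by apply: le_pr; [exact: measurableI | exact: measurableI | exact: setSI].
Qed.

Lemma condprob_sublevel_setC N (Z : {RV P >-> R}) y : measurable N ->
  condprob P [set t | Z t <= y] (~` N) =
  (Fr Z y - pr P (N `&` [set t | Z t <= y])) / (1 - pr P N).
Proof.
move=> mN; have mZ := measurable_sublevel Z y.
by rewrite /condprob -/(pr P _) -/(pr P _) -setDE pr_setD // (setIC _ N) FrE pr_setC.
Qed.

Lemma distortion_condprob A (Z : {RV P >-> R}) (h : R -> R) : measurable A ->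
  (forall v, 0 <= v <= 1 -> condprob P [set t | Z t <= v] A = h v) ->
  h 0 = 0 -> h 1 = 1 -> distortion h.
Proof.
move=> mA condE h0 h1; split => // [v v01|v w v0 vw w1].
  rewrite -condE // condprob_ge0 condprob_le1 //; exact: measurable_sublevel.
rewrite -!condE ?v0 ?w1 ?(le_trans v0 vw) ?(le_trans vw w1) //.
apply: le_condprob => //; try exact: measurable_sublevel.
by move=> t /= /le_trans; apply.
Qed.

Lemma VaR_continuous (Z : {RV P >-> R}) a : continuous (Fr Z) -> 0 < a < 1 ->
  exists q, VaR Z a = q%:E /\ Fr Z q = a.
Proof.
move=> cF /andP[a0 a1]; set S := [set x | a <= Fr Z x].
have lbS : has_lbound S.
  have [r0 Fr0_lt] := exists_Fr_lt Z _ a0.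
  exists r0 => x; rewrite /S /= => ax.
  by rewrite leNgt; apply/negP => /ltW /(Fr_nondecreasing Z) Fx_le; lra.
have S0 : S !=set0 by have [r1 /ltW] := exists_Fr_gt Z _ a1; exists r1.
exists (inf S); split; first by rewrite /VaR ereal_inf_EFin.
exact: continuous_inf_ge.
Qed.

Lemma VaR_lt_le0 (Z : {RV P >-> R}) a t : a <= 0 -> (VaR Z a < (Z t)%:E)%E.
Proof.
move=> a0; apply: (@le_lt_trans _ _ (Z t - 1)%:E); last by rewrite lte_fin ltrBlDr ltrDl.
apply: ereal_inf_lbound; exists (Z t - 1) => //=.
by have /andP[+ _] := Fr01 Z (Z t - 1); exact: le_trans.
Qed.

Lemma pr_xy_sublevel {n} {C : ('I_n.+1 -> R) -> R}
    {Z : 'I_n -> {RV P >-> R}} {W : {RV P >-> R}} :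
  copula_of C (xy Z W) -> forall a w,
  pr P ([set t | forall i, Z i t <= a i] `&` [set t | W t <= w]) =
  C (av (fun i => Fr (Z i) (a i)) (Fr W w)).
Proof.
case=> _ jointE a w.
have -> : av (fun i => Fr (Z i) (a i)) (Fr W w) = fun i => Fr (xy Z W i) (av a w i).
  by apply/funext => i; rewrite /xy /av; case: unliftP.
rewrite -jointE /joint_cdf /pr; congr (fine (P _)); apply/seteqP; split => t /=.
- move=> [Za Ww] i; rewrite /xy /av; case: unliftP => [j _|_] //; exact: Za.
- move=> Zaw; split; last by have := Zaw ord_max; rewrite /xy /av unlift_none.
  by move=> j; have := Zaw (lift ord_max j); rewrite /xy /av liftK.
Qed.
End real_probability.

Lemma in_cube_av (R : realType) n (a : 'I_n -> R) v :
  (forall i, 0 <= a i <= 1) -> 0 <= v <= 1 -> in_cube (av a v).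
Proof. by move=> a01 v01 i; rewrite /av; case: unliftP. Qed.

Lemma copula_av_eq0 {R : realType} {n} {C : ('I_n.+1 -> R) -> R} {a v} :
  is_copula C -> (forall i, 0 <= a i <= 1) -> 0 <= v <= 1 ->
  (exists i, av a v i = 0) -> C (av a v) = 0.
Proof. by case=> grounded _ _ a01 v01; apply: grounded; exact: in_cube_av. Qed.

Section uniform_representation.
Context {dT : measure_display} {T : measurableType dT} {R : realType}.
Context {P : probability T R} {d : nat} {U : 'I_d -> {RV P >-> R}} {V : {RV P >-> R}}.
Context {C : ('I_d.+1 -> R) -> R} {alpha : 'I_d -> R}.
Hypothesis FU : forall i u, 0 <= u <= 1 -> Fr (U i) u = u.
Hypothesis FV : forall v, 0 <= v <= 1 -> Fr V v = v.
Hypothesis copUV : copula_of C (xy U V).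
Hypothesis alpha01 : forall i, 0 <= alpha i <= 1.

Let NU := [set t | forall i, U i t <= alpha i].

Let mNU : measurable NU.
Proof. by apply: measurable_forall => i; exact: measurable_sublevel. Qed.

Lemma copula_av_pr w : 0 <= w <= 1 -> C (av alpha w) = pr P (NU `&` [set t | V t <= w]).
Proof.
move=> w01; rewrite (pr_xy_sublevel copUV) FV //; congr (C (av _ _)).
by apply/funext => i; rewrite FU.
Qed.

Lemma copula_av1_pr : C (av alpha 1) = pr P NU.
Proof.
have := pr_setI_sublevel _ V 1 mNU; rewrite -copula_av_pr ?FV ?ler01 ?lexx // subrr.
by rewrite -eq_le eq_sym subr_eq0 => /eqP.
Qed.

Lemma copula_av_lipschitz w : 0 <= w <= 1 ->
  0 <= C (av alpha 1) - C (av alpha w) <= 1 - w.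
Proof.
move=> w01; rewrite copula_av1_pr copula_av_pr // -{3}(FV _ w01).
exact: pr_setI_sublevel.
Qed.

Lemma condprob_uniform_exceedance v : 0 <= v <= 1 ->
  condprob P [set t | V t <= v] [set t | exists i, alpha i < U i t] =
  (v - C (av alpha v)) / (1 - C (av alpha 1)).
Proof.
move=> v01; rewrite -setC_forall_le condprob_sublevel_setC //.
by rewrite FV // -copula_av_pr // -copula_av1_pr.
Qed.
End uniform_representation.

Section exceedance.
Context {dT : measure_display} {T : measurableType dT} {R : realType}.
Context {P : probability T R} {d : nat} {X : 'I_d -> {RV P >-> R}} {Y : {RV P >-> R}}.
Context {C : ('I_d.+1 -> R) -> R} {alpha : 'I_d -> R}.
Hypothesis cX : forall i, continuous (Fr (X i)).
Hypothesis copXY : copula_of C (xy X Y).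
Hypothesis alpha01 : forall i, 0 <= alpha i < 1.
Hypothesis C_lipschitz : forall w, 0 <= w <= 1 ->
  0 <= C (av alpha 1) - C (av alpha w) <= 1 - w.

Lemma VaR_exceedance_setC : exists N, [/\ measurable N,
  [set t | exists i, (VaR (X i) (alpha i) < (X i t)%:E)%E] = ~` N,
  pr P N = C (av alpha 1) &
  forall y, pr P (N `&` [set t | Y t <= y]) = C (av alpha (Fr Y y))].
Proof.
have alpha_cube i : 0 <= alpha i <= 1 by have /andP[-> /ltW ->] := alpha01 i.
have [[k alpha_k0]|alpha_gt0] := pselect (exists k, alpha k = 0).
  have C0 w : 0 <= w <= 1 -> C (av alpha w) = 0.
    move=> w01; apply: copula_av_eq0 copXY.1 alpha_cube w01 _.
    by exists (lift ord_max k); rewrite /av liftK.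
  exists set0; split => [|||y]; first exact: measurable0.
  - rewrite setC0; apply/seteqP; split => // t _.
    by exists k; apply: VaR_lt_le0; rewrite alpha_k0.
  - by rewrite pr_set0 C0 // ler01 lexx.
  - by rewrite set0I pr_set0 C0 // Fr01.
have /fin_all_exists [q qE] i : exists q, VaR (X i) (alpha i) = q%:E /\ Fr (X i) q = alpha i.
  apply: VaR_continuous => //; have /andP[a0 a1] := alpha01 i.
  rewrite a1 andbT lt_neqAle a0 andbT eq_sym.
  by apply/eqP => ai0; apply: alpha_gt0; exists i.
set NX := [set t | forall i, X i t <= q i].
have pr_NX_Y y : pr P (NX `&` [set t | Y t <= y]) = C (av alpha (Fr Y y)).
  rewrite (pr_xy_sublevel copXY); congr (C (av _ _)).
  by apply/funext => i; rewrite (qE i).2.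
exists NX; split => //.
- by apply: measurable_forall => i; exact: measurable_sublevel.
- rewrite setC_forall_le; apply/seteqP; split => t [i Xi]; exists i.
  + by move: Xi; rewrite (qE i).1 lte_fin.
  + by rewrite (qE i).1 lte_fin.
- apply: (pr_eq_sublevel_limit _ Y) => [|r].
    by apply: measurable_forall => i; exact: measurable_sublevel.
  have /andP[C_ge C_le] := C_lipschitz _ (Fr01 Y r).
  by rewrite pr_NX_Y ger0_norm.
Qed.
End exceedance.

Theorem lemma3p2 (R : realType) (d : nat)
  (dT : measure_display) (T : measurableType dT) (P : probability T R)
  (X : 'I_d -> {RV P >-> R}) (Y : {RV P >-> R})
  (dT' : measure_display) (T' : measurableType dT') (P' : probability T' R)
  (U : 'I_d -> {RV P' >-> R}) (V : {RV P' >-> R})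
  (C : ('I_d.+1 -> R) -> R) (alpha : 'I_d -> R) :
  (0 < d)%N ->
  (forall i, continuous (Fr (X i) : R -> R)) -> continuous (Fr Y : R -> R) ->
  copula_of C (xy X Y) ->
  (forall i u, 0 <= u <= 1 -> Fr (U i) u = u) ->
  (forall v, 0 <= v <= 1 -> Fr V v = v) ->
  copula_of C (xy U V) ->
  (forall i, 0 <= alpha i < 1) ->
  C (av alpha 1) < 1 ->
  let AU := [set t | exists i, alpha i < U i t] in
  let AX := [set t | exists i, (VaR (X i) (alpha i) < (X i t)%:E)%E] in
  let h := fun v : R => (v - C (av alpha v)) / (1 - C (av alpha 1)) in
  [/\ (forall v, 0 <= v <= 1 -> condprob P' [set t | V t <= v] AU = h v),
      distortion h &
      (forall y : R, condprob P [set t | Y t <= y] AX = h (Fr Y y))].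
Proof.
move=> _ cX _ copXY FU FV copUV alpha01 C1_lt1 AU AX h.
have alpha_cube i : 0 <= alpha i <= 1 by have /andP[-> /ltW ->] := alpha01 i.
have condprob_AU := condprob_uniform_exceedance FU FV copUV alpha_cube.
have [N [mN AXE prN prN_Y]] := VaR_exceedance_setC cX copXY alpha01
  (copula_av_lipschitz FU FV copUV alpha_cube).
split => // [|y]; last by rewrite /AX AXE condprob_sublevel_setC // prN prN_Y.
apply: (distortion_condprob _ _ _ (measurable_exists_gt _ _ _) condprob_AU).
- rewrite /h (copula_av_eq0 copUV.1 alpha_cube) ?lexx ?ler01 ?subr0 ?mul0r //.
  by exists ord_max; rewrite /av unlift_none.
- by rewrite /h divff // subr_eq0 gt_eqF.
Qed.
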